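(* Let $\mu,\varepsilon,\nu,\Omega,\omega$ be real or complex parameters with $\mu\neq 0$ and $\nu\notin\{0,-1,-2,\dots\}$, and consider the grand confluent hypergeometric (GCH) equation $$x\,y''(x)+\left(\mu x^2+\varepsilon x+\nu\right)y'(x)+\left(\Omega x+\varepsilon\omega\right)y(x)=0 .$$ Put $\gamma=\tfrac12(1+\nu)$, $a=\frac{\Omega}{2\mu}$, $\tilde\varepsilon=-\tfrac12\varepsilon x$ and $z=-\tfrac12\mu x^2$, and assume $\gamma-a$ is not a nonpositive integer. Then the function $$ \begin{aligned} y(x)=QW\Big(\omega,\gamma;\tilde\varepsilon;z\Big)=\frac{\Gamma(\gamma-a)}{\Gamma(\gamma)}\Bigg\{&\sum_{i_0=0}^{\infty}\frac{(a)_{i_0}}{(1)_{i_0}(\gamma)_{i_0}}z^{i_0}\\ &+\Bigg\{\sum_{i_0=0}^{\infty}\frac{(i_0+\frac{\omega}{2})}{(i_0+\frac12)(i_0-\frac12+\gamma)}\frac{(a)_{i_0}}{(1)_{i_0}(\gamma)_{i_0}}\sum_{i_1=i_0}^{\infty}\frac{(a+\frac12)_{i_1}(\frac32)_{i_0}(\gamma+\frac12)_{i_0}}{(a+\frac12)_{i_0}(\frac32)_{i_1}(\gamma+\frac12)_{i_1}}z^{i_1}\Bigg\}\tilde\varepsilon\\ &+\sum_{n=2}^{\infty}\Bigg\{\sum_{i_0=0}^{\infty}\frac{(i_0+\frac{\omega}{2})}{(i_0+\frac12)(i_0-\frac12+\gamma)}\frac{(a)_{i_0}}{(1)_{i_0}(\gamma)_{i_0}}\\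 &\quad\times\prod_{k=1}^{n-1}\Bigg\{\sum_{i_k=i_{k-1}}^{\infty}\frac{(i_k+\frac{\omega}{2}+\frac{k}{2})}{(i_k+\frac12+\frac k2)(i_k-\frac12+\gamma+\frac k2)}\frac{(a+\frac k2)_{i_k}(1+\frac k2)_{i_{k-1}}(\frac k2+\gamma)_{i_{k-1}}}{(a+\frac k2)_{i_{k-1}}(1+\frac k2)_{i_k}(\frac k2+\gamma)_{i_k}}\Bigg\}\\ &\quad\times\sum_{i_n=i_{n-1}}^{\infty}\frac{(a+\frac n2)_{i_n}(1+\frac n2)_{i_{n-1}}(\frac n2+\gamma)_{i_{n-1}}}{(a+\frac n2)_{i_{n-1}}(1+\frac n2)_{i_n}(\frac n2+\gamma)_{i_n}}z^{i_n}\Bigg\}\tilde\varepsilon^{\,n}\Bigg\} \end{aligned} $$ is the power series expansion about $x=0$ of a solution (the solution of the first kind, corresponding to the indicial root $\lambda=0$) of the GCH equation.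
   Context: $(x)_n=\Gamma(x+n)/\Gamma(x)$ denotes the Pochhammer symbol (rising factorial), and for integers $m\ge n\ge 0$ a quotient $(b)_m/(b)_n$ is understood as $\prod_{j=n}^{m-1}(b+j)$. In the term with index $n\ge 2$, the product over $k=1,\dots,n-1$ denotes nested summation: the sum over $i_k$ runs from $i_{k-1}$ to $\infty$, with $i_{k-1}$ the summation index of the previous level, and the innermost sum over $i_n$ runs from $i_{n-1}$ to $\infty$. *)

From Stdlib Require Import Reals Factorial ClassicalEpsilon.
From Coquelicot Require Import Coquelicot.
Open Scope C_scope.

Definition natC (n : nat) : C := RtoC (INR n).

Fixpoint prod_from (f : nat -> C) (p n : nat) : C :=
  match n with
  | O => 1
  | S n' => f p * prod_from f (S p) n'
  end.

Definition poch (x : C) (n : nat) : C := prod_from (fun j => x + natC j) 0 n.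

(* For p <= q, quotient (x)_q / (x)_p understood as prod_{j=p}^{q-1} (x+j) *)
Definition poch_quot (x : C) (q p : nat) : C :=
  prod_from (fun j => x + natC j) p (q - p)%nat.

Definition cpow_pos (t : R) (s : C) : C :=
  (exp (Re s * ln t) * cos (Im s * ln t), exp (Re s * ln t) * sin (Im s * ln t))%R.

(* Euler's Gamma function on C (Gauss' product formula):
   Gamma(s) = lim_{n -> oo} n! n^s / (s (s+1) ... (s+n)),
   for s not a nonpositive integer. *)
Definition Gauss_seq (s : C) (n : nat) : C :=
  natC (fact n) * cpow_pos (INR n) s / poch s (S n).

Definition CGamma (s : C) : C :=
  epsilon (inhabits (RtoC 0))
    (fun L => filterlim (Gauss_seq s) eventually (locally L)).

Section QW.
Variables (omega gam a : C).

Definition half (k : nat) : C := natC k / 2.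

Definition A0 (i : nat) : C :=
  (natC i + omega / 2) / ((natC i + / 2) * (natC i - / 2 + gam))
  * (poch a i / (poch 1 i * poch gam i)).

Definition B0 (i : nat) : C := poch a i / (poch 1 i * poch gam i).

Definition Wk (k i : nat) : C :=
  (natC i + omega / 2 + half k)
  / ((natC i + / 2 + half k) * (natC i - / 2 + gam + half k)).

Definition Rk (k p q : nat) : C :=
  poch_quot (a + half k) q p
  / (poch_quot (1 + half k) q p * poch_quot (half k + gam) q p).

(* Nested summation: F n i = sum over 0 <= i_0 <= i_1 <= ... <= i_{n-1} = i of
   A0 i_0 * prod_{k=1}^{n-1} ( Wk k i_k * Rk k i_{k-1} i_k )   (n >= 1). *)
Fixpoint F (n : nat) (i : nat) : C :=
  match n with
  | O => 0
  | S O => A0 i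
  | S (S _ as n') => sum_n (fun p => F n' p * Rk n' p i) i * Wk n' i
  end.

(* coefficient of z^j in the coefficient of eps~^n:
   n = 0 : B0 j ;  n >= 1 : sum_{i_{n-1} <= j} F n i_{n-1} * Rk n i_{n-1} j *)
Definition d (n j : nat) : C :=
  match n with
  | O => B0 j
  | S _ => sum_n (fun p => F n p * Rk n p j) j
  end.

End QW.

(* The bracketed double series  sum_n sum_j d n j z^j eps~^n  with
   eps~ = -eps x / 2 and z = - mu x^2 / 2, collected as a power series in x:
   the coefficient of x^m gathers the (finitely many) terms with n + 2 j = m. *)
Definition QWcoef (omega gam a eps mu : C) (m : nat) : C :=
  sum_n (fun n =>
     if Nat.even (m - n)%nat then
       d omega gam a n (Nat.div2 (m - n)%nat)
       * pow_n (- eps / 2) n * pow_n (- mu / 2) (Nat.div2 (m - n)%nat)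
     else RtoC 0) m.

Definition nonpos_int (s : C) : Prop := exists k : nat, s = - natC k.

From Stdlib Require Import Reals Lra Lia ClassicalEpsilon.
From Coquelicot Require Import Coquelicot.
Open Scope C_scope.

(* Write y = sum_m c_m x^m.  The GCH equation is equivalent to the three-term
   recurrence (m+1)(m+nu) c_(m+1) + eps (m+omega) c_m + (mu (m-1) + Omega) c_(m-1) = 0.
   In QW the coefficient d n j of eps~^n z^j contributes to x^(n+2j), and the nested
   sums are built so that d satisfies the contiguity relation
     (n+2j)(n+2j-2+2 gam) d n j = 2 (n+2j-1+omega) d (n-1) j + 2 (n+2j-2+2a) d n (j-1),
   which becomes exactly the recurrence after collecting powers of x.  The recurrence
   has a quadratically growing leading factor against linearly growing ones, so c_m
   decays faster than any geometric sequence; the series and its term-wise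
   derivatives therefore converge, and may be differentiated term by term, near 0. *)

Lemma natC_0 : natC 0 = 0.
Proof. reflexivity. Qed.

Lemma natC_S n : natC (S n) = natC n + 1.
Proof. unfold natC. rewrite S_INR, RtoC_plus. reflexivity. Qed.

Lemma natC_add m n : natC (m + n) = natC m + natC n.
Proof. unfold natC. rewrite plus_INR, RtoC_plus. reflexivity. Qed.

Lemma natC_double n : natC (2 * n) = 2 * natC n.
Proof. unfold natC. rewrite mult_INR, RtoC_mult. reflexivity. Qed.

Lemma natC_S_neq0 n : natC (S n) <> 0.
Proof.
  unfold natC. intros H. apply RtoC_inj in H. rewrite S_INR in H.
  pose proof (pos_INR n). lra.
Qed.

Ltac natC_simpl :=
  repeat first [rewrite natC_add | rewrite natC_double | rewrite natC_S | rewrite natC_0].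

Lemma Cneq0_of_mult (x y c : C) : y <> 0 -> x * c = y -> x <> 0.
Proof. intros Hy Hxy Hx. apply Hy. rewrite <- Hxy, Hx. ring. Qed.

Lemma Cmod_natC n : Cmod (natC n) = INR n.
Proof. unfold natC. rewrite Cmod_R. apply Rabs_pos_eq, pos_INR. Qed.

(* Total version of [Cinv_mult_distr]: both sides are [0] when a factor is [0]. *)
Lemma Cinv_mult (x y : C) : / (x * y) = / x * / y.
Proof.
  assert (Hinv0 : / (0 : C) = 0).
  { unfold Cinv. simpl. unfold Rdiv. rewrite !Rmult_0_l, Ropp_0, Rmult_0_l. reflexivity. }
  destruct (Ceq_dec x 0) as [->|Hx]; [rewrite Cmult_0_l, Hinv0; ring|].
  destruct (Ceq_dec y 0) as [->|Hy]; [rewrite Cmult_0_r, Hinv0; ring|].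
  field. auto.
Qed.

Lemma pow_n_C_0 (x : C) : pow_n x 0 = RtoC 1.
Proof. reflexivity. Qed.

Lemma pow_n_C_S (x : C) n : pow_n x (S n) = x * pow_n x n.
Proof. reflexivity. Qed.

Lemma even_double_div2 k : Nat.even k = true -> k = (2 * Nat.div2 k)%nat.
Proof. intros Hk. rewrite (Nat.div2_odd k) at 1. rewrite <- Nat.negb_even, Hk. simpl. lia. Qed.

Lemma sum_n_C_Sr (f : nat -> C) n : sum_n f (S n) = sum_n f n + f (S n).
Proof. rewrite sum_Sn. reflexivity. Qed.

Lemma sum_n_C_Sl (f : nat -> C) n : sum_n f (S n) = f 0%nat + sum_n (fun k => f (S k)) n.
Proof. unfold sum_n. rewrite sum_Sn_m, <- sum_n_m_S by lia. reflexivity. Qed.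

Lemma sum_n_C_plus (f g : nat -> C) n : sum_n (fun k => f k + g k) n = sum_n f n + sum_n g n.
Proof. apply (sum_n_plus f g n). Qed.

Lemma sum_n_C_scal (c : C) (f : nat -> C) n : sum_n (fun k => c * f k) n = c * sum_n f n.
Proof. apply (sum_n_mult_l c f n). Qed.

Lemma prod_from_S_r f p n : prod_from f p (S n) = prod_from f p n * f (p + n)%nat.
Proof.
  revert p; induction n as [|n IH]; intros p; simpl.
  - rewrite Nat.add_0_r. ring.
  - simpl in IH. rewrite IH. replace (S p + n)%nat with (p + S n)%nat by lia. ring.
Qed.

Lemma poch_S x n : poch x (S n) = poch x n * (x + natC n).
Proof. apply prod_from_S_r. Qed.

Lemma poch_quot_diag x p : poch_quot x p p = 1.
Proof. unfold poch_quot. rewrite Nat.sub_diag. reflexivity. Qed.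

Lemma poch_quot_S x q p : (p <= q)%nat ->
  poch_quot x (S q) p = poch_quot x q p * (x + natC q).
Proof.
  intros Hpq. unfold poch_quot. rewrite Nat.sub_succ_l, prod_from_S_r by exact Hpq.
  now rewrite Nat.add_sub_assoc, Nat.add_sub_swap, Nat.sub_diag by lia.
Qed.

(** * The contiguity relation of the coefficients *)

Section Coefficients.
Variables omega gam a : C.

Lemma B0_S j : B0 gam a (S j) = B0 gam a j * ((a + natC j) / ((1 + natC j) * (gam + natC j))).
Proof. unfold B0. rewrite !poch_S. unfold Cdiv. rewrite !Cinv_mult. ring. Qed.

Lemma Rk_diag k p : Rk gam a k p p = 1.
Proof. unfold Rk. rewrite !poch_quot_diag. field. Qed.

Lemma Rk_S k p q : (p <= q)%nat -> Rk gam a k p (S q) = Rk gam a k p q *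
  ((a + half k + natC q) / ((1 + half k + natC q) * (half k + gam + natC q))).
Proof.
  intros Hpq. unfold Rk. rewrite !poch_quot_S by exact Hpq. unfold Cdiv. rewrite !Cinv_mult. ring.
Qed.

Lemma F_S n j : F omega gam a (S n) j = Wk omega gam n j * d omega gam a n j.
Proof.
  destruct n as [|n].
  2:{ change (F omega gam a (S (S n)) j) with (d omega gam a (S n) j * Wk omega gam (S n) j). ring. }
  assert (Hhalf0 : half 0 = 0) by (unfold half, Cdiv; rewrite natC_0; ring).
  unfold F, A0, Wk, d, B0. rewrite Hhalf0, !Cplus_0_r. unfold Cdiv. rewrite !Cinv_mult. ring.
Qed.

Lemma d_S n j : d omega gam a (S n) (S j) =
  (a + half (S n) + natC j) / ((1 + half (S n) + natC j) * (half (S n) + gam + natC j))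
    * d omega gam a (S n) j + F omega gam a (S n) (S j).
Proof.
  unfold d. rewrite sum_Sn. change plus with Cplus. rewrite Rk_diag, Cmult_1_r.
  rewrite (sum_n_ext_loc _ (fun p => (F omega gam a (S n) p * Rk gam a (S n) p j) *
     ((a + half (S n) + natC j) / ((1 + half (S n) + natC j) * (half (S n) + gam + natC j))))).
  2:{ intros p Hp. rewrite Rk_S by exact Hp. apply Cmult_assoc. }
  rewrite (sum_n_mult_r (K := C_AbsRing)). change mult with Cmult. rewrite Cmult_comm. reflexivity.
Qed.

Hypothesis Hgam : forall k, natC k + 2 * gam - 1 <> 0.

Lemma d_contiguous n j :
  natC (n + 2 * j) * (natC (n + 2 * j) - 2 + 2 * gam) * d omega gam a n j =
  2 * (natC (n + 2 * j) - 1 + omega) * (match n with O => 0 | S n' => d omega gam a n' j end)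
  + 2 * (natC (n + 2 * j) - 2 + 2 * a) * (match j with O => 0 | S j' => d omega gam a n j' end).
Proof.
  (* The denominators left by [field] are multiples of [natC k + 2 gam - 1] or [natC (S k)]. *)
  destruct n as [|n], j as [|j].
  - simpl. rewrite natC_0. ring.
  - unfold d. rewrite B0_S. natC_simpl. field. split.
    + apply (Cneq0_of_mult _ _ 2 (Hgam (2 * j + 1))). natC_simpl. ring.
    + apply (Cneq0_of_mult _ _ 1 (natC_S_neq0 j)). natC_simpl. ring.
  - assert (Hd0 : d omega gam a (S n) 0 = F omega gam a (S n) 0).
    { unfold d. rewrite sum_O, Rk_diag. ring. }
    rewrite Hd0, F_S. unfold Wk, half. natC_simpl. field. split.
    + apply (Cneq0_of_mult _ _ 1 (Hgam n)). natC_simpl. ring.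
    + apply (Cneq0_of_mult _ _ 1 (natC_S_neq0 n)). natC_simpl. ring.
  - rewrite d_S, F_S. unfold Wk, half. natC_simpl. field. split.
    + apply (Cneq0_of_mult _ _ 1 (Hgam (n + 2 * S j))). natC_simpl. ring.
    + apply (Cneq0_of_mult _ _ 1 (natC_S_neq0 (n + 2 * S j))). natC_simpl. ring.
Qed.
End Coefficients.

(** * Collecting the powers of x *)

(* sum of g n j over the pairs n + 2 j = m *)
Definition antidiag2 (g : nat -> nat -> C) (m : nat) : C :=
  sum_n (fun n => if Nat.even (m - n) then g n (Nat.div2 (m - n)) else RtoC 0) m.

Lemma antidiag2_ext g1 g2 m :
  (forall n j, (n + 2 * j)%nat = m -> g1 n j = g2 n j) -> antidiag2 g1 m = antidiag2 g2 m.
Proof.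
  intros Hg. apply sum_n_ext_loc. intros n Hn.
  destruct (Nat.even (m - n)) eqn:Hev; [|reflexivity].
  apply Hg. pose proof (even_double_div2 _ Hev). lia.
Qed.

Lemma antidiag2_scale (c : C) g m :
  antidiag2 (fun n j => c * g n j) m = c * antidiag2 g m.
Proof.
  unfold antidiag2. rewrite <- sum_n_C_scal.
  apply sum_n_ext. intros n. destruct (Nat.even (m - n)); simpl; ring.
Qed.

Lemma antidiag2_lin (b c : C) g1 g2 m :
  antidiag2 (fun n j => b * g1 n j + c * g2 n j) m = b * antidiag2 g1 m + c * antidiag2 g2 m.
Proof.
  unfold antidiag2.
  rewrite <- !sum_n_C_scal, <- sum_n_C_plus.
  apply sum_n_ext. intros n. destruct (Nat.even (m - n)); simpl; ring.
Qed.

Lemma antidiag2_shift_n g m :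
  antidiag2 (fun n j => match n with O => 0 | S n' => g n' j end) (S m) = antidiag2 g m.
Proof.
  unfold antidiag2. rewrite sum_n_C_Sl.
  destruct (Nat.even (S m - 0)); rewrite Cplus_0_l; reflexivity.
Qed.

Lemma antidiag2_shift_j g m :
  antidiag2 (fun n j => match j with O => 0 | S j' => g n j' end) (S m)
  = match m with O => 0 | S m' => antidiag2 g m' end.
Proof.
  unfold antidiag2. destruct m as [|m].
  - rewrite sum_n_C_Sr, sum_O. simpl. ring.
  - rewrite !sum_n_C_Sr.
    rewrite (sum_n_ext_loc _ (fun n => if Nat.even (m - n) then g n (Nat.div2 (m - n)) else RtoC 0)).
    2:{ intros n Hn. replace (S (S m) - n)%nat with (S (S (m - n))) by lia. simpl Nat.even.
        simpl Nat.div2. destruct (Nat.even (m - n)); reflexivity. }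
    replace (S (S m) - S m)%nat with 1%nat by lia. rewrite Nat.sub_diag. simpl.
    rewrite !Cplus_0_r. reflexivity.
Qed.

Lemma antidiag2_recurrence g (A B D : C) m :
  (forall n j, (n + 2 * j)%nat = S m ->
     A * g n j = B * (match n with O => 0 | S n' => g n' j end)
               + D * (match j with O => 0 | S j' => g n j' end)) ->
  A * antidiag2 g (S m)
  = B * antidiag2 g m + D * (match m with O => 0 | S m' => antidiag2 g m' end).
Proof.
  intros Hg.
  rewrite <- (antidiag2_shift_n g m), <- (antidiag2_shift_j g m), <- antidiag2_lin.
  rewrite <- antidiag2_scale. apply antidiag2_ext. intros n j Hnj. exact (Hg n j Hnj).
Qed.

(* Coefficient form of the GCH equation for [y = sum c_m x^m]. *)
Definition gch_recurrence (mu eps nu Omega omega : C) (c : nat -> C) : Prop :=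
  forall m, natC (S m) * (natC m + nu) * c (S m) + eps * (natC m + omega) * c m
    + (match m with O => 0 | S m' => (mu * natC m' + Omega) * c m' end) = 0.

Lemma gch_recurrence_scale mu eps nu Omega omega c (K : C) :
  gch_recurrence mu eps nu Omega omega c ->
  gch_recurrence mu eps nu Omega omega (fun m => K * c m).
Proof.
  intros Hc m. specialize (Hc m). destruct m; cbv beta iota in Hc |- *;
    (match type of Hc with ?E = _ => transitivity (K * E) end; [ring | rewrite Hc; ring]).
Qed.

Lemma QWcoef_recurrence omega gam a eps mu :
  (forall k, natC k + 2 * gam - 1 <> 0) ->
  gch_recurrence mu eps (2 * gam - 1) (2 * mu * a) omega (QWcoef omega gam a eps mu).
Proof.
  intros Hgam m.
  set (g := fun n j => d omega gam a n j * pow_n (- eps / 2) n * pow_n (- mu / 2) j).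
  change (QWcoef omega gam a eps mu) with (antidiag2 g).
  assert (Hstep : natC (S m) * (natC (S m) - 2 + 2 * gam) * antidiag2 g (S m) =
     2 * (natC (S m) - 1 + omega) * (- eps / 2) * antidiag2 g m +
     2 * (natC (S m) - 2 + 2 * a) * (- mu / 2) * match m with O => 0 | S m' => antidiag2 g m' end).
  { apply antidiag2_recurrence. intros n j Hnj. rewrite <- Hnj. unfold g.
    transitivity (natC (n + 2 * j) * (natC (n + 2 * j) - 2 + 2 * gam) * d omega gam a n j
       * pow_n (- eps / 2) n * pow_n (- mu / 2) j); [ring|].
    rewrite d_contiguous by exact Hgam.
    destruct n, j; cbv beta iota; rewrite ?pow_n_C_S, ?pow_n_C_0; ring. }
  match type of Hstep with ?X = ?Y => transitivity (X - Y) end.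
  - destruct m; natC_simpl; field.
  - rewrite Hstep. ring.
Qed.

(** * Power series over C *)

Definition geom_bounded (b : nat -> C) (q : R) : Prop :=
  exists C0, forall m, (Cmod (b m) <= C0 * q ^ m)%R.

Definition CPS_derive (b : nat -> C) (m : nat) : C := natC (S m) * b (S m).

(* Some sum of the power series at [x], chosen by [epsilon]; it is only
   meaningful where the series converges. *)
Definition CPSeries (b : nat -> C) (x : C) : C :=
  epsilon (inhabits (RtoC 0)) (fun l => is_series (fun m => b m * pow_n x m) l).

Lemma Cmod_pow_n (x : C) m : Cmod (pow_n x m) = (Cmod x ^ m)%R.
Proof. induction m as [|m IH]; simpl. apply Cmod_1. rewrite Cmod_mult, IH. reflexivity. Qed.

Lemma INR_S_le_pow2 m : (INR (S m) <= 2 ^ m)%R.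
Proof.
  induction m as [|m IH]; [simpl; lra|].
  pose proof (pow_R1_Rle 2 m ltac:(lra)). rewrite !S_INR in *. simpl. lra.
Qed.

Lemma INR_sqr_le_pow3 m : (INR m ^ 2 <= 3 ^ m)%R.
Proof.
  induction m as [|m IH]; [simpl; lra|].
  pose proof (INR_S_le_pow2 m). pose proof (pow_incr 2 3 m ltac:(lra)).
  rewrite S_INR in *. simpl in *. nra.
Qed.

Lemma geom_bounded_const_nonneg b q C0 :
  (forall m, (Cmod (b m) <= C0 * q ^ m)%R) -> (0 <= C0)%R.
Proof. intros Hb. specialize (Hb 0%nat). pose proof (Cmod_ge_0 (b 0%nat)). simpl in Hb. lra. Qed.

Lemma geom_bounded_weaken b q q' :
  (0 <= q <= q')%R -> geom_bounded b q -> geom_bounded b q'.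
Proof.
  intros Hq [C0 Hb]. exists C0. intros m.
  pose proof (geom_bounded_const_nonneg _ _ _ Hb).
  eapply Rle_trans; [apply Hb|]. apply Rmult_le_compat_l; [lra|]. apply pow_incr. lra.
Qed.

Lemma geom_bounded_CPS_derive b q :
  (0 <= q <= 1)%R -> geom_bounded b (q / 2) -> geom_bounded (CPS_derive b) q.
Proof.
  intros Hq [C0 Hb]. exists C0. intros m.
  pose proof (geom_bounded_const_nonneg _ _ _ Hb) as HC0.
  unfold CPS_derive. rewrite Cmod_mult, Cmod_natC.
  assert (Hpow : (2 ^ m * (q / 2) ^ m = q ^ m)%R).
  { rewrite <- Rpow_mult_distr. f_equal. field. }
  pose proof (pow_le q m ltac:(lra)).
  pose proof (pow_le (q / 2) m ltac:(lra)).
  pose proof (Hb (S m)). simpl pow in *.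
  pose proof (INR_S_le_pow2 m). pose proof (pos_INR (S m)). pose proof (Cmod_ge_0 (b (S m))).
  assert (INR (S m) * Cmod (b (S m)) <= 2 ^ m * (C0 * (q / 2 * (q / 2) ^ m)))%R
    by (apply Rmult_le_compat; lra).
  assert (2 ^ m * (C0 * (q / 2 * (q / 2) ^ m)) = q / 2 * (C0 * q ^ m))%R
    by (rewrite <- Hpow; ring).
  pose proof (Rmult_le_pos (1 - q / 2) (C0 * q ^ m) ltac:(lra) (Rmult_le_pos _ _ HC0 H)).
  lra.
Qed.

Lemma is_series_CPSeries b q x :
  (0 <= q)%R -> (q * Cmod x < 1)%R -> geom_bounded b q ->
  is_series (fun m => b m * pow_n x m) (CPSeries b x).
Proof.
  intros Hq Hqx [C0 Hb].
  unfold CPSeries. apply epsilon_spec.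
  assert (Hex : ex_series (K := C_AbsRing) (V := C_CompleteNormedModule) (fun m => b m * pow_n x m)).
  2:{ destruct Hex as [l Hl]. exists l. exact Hl. }
  apply (ex_series_le _ (fun m => C0 * (q * Cmod x) ^ m)%R).
  - intros m. change (norm (b m * pow_n x m)) with (Cmod (b m * pow_n x m)).
    rewrite Cmod_mult, Cmod_pow_n, Rpow_mult_distr, <- Rmult_assoc.
    apply Rmult_le_compat_r; [apply pow_le, Cmod_ge_0 | apply Hb].
  - eexists. apply (is_series_scal_l C0 (fun m => (q * Cmod x) ^ m)%R), is_series_geom.
    pose proof (Cmod_ge_0 x). rewrite Rabs_pos_eq; nra.
Qed.

Lemma is_series_C_unique (a : nat -> C) l1 l2 : is_series a l1 -> is_series a l2 -> l1 = l2.
Proof. intros H1 H2. exact (filterlim_locally_unique _ _ _ H1 H2). Qed.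

Lemma is_series_C_scal (c : C) (a : nat -> C) l :
  is_series a l -> is_series (fun n => c * a n) (c * l).
Proof. apply (is_series_scal c a l). Qed.

Lemma is_series_C_plus (a b : nat -> C) la lb :
  is_series a la -> is_series b lb -> is_series (fun n => a n + b n) (la + lb).
Proof. apply (is_series_plus a b la lb). Qed.

Lemma is_series_C_shift (a : nat -> C) l :
  is_series a l -> is_series (fun m => match m with O => RtoC 0 | S k => a k end) l.
Proof.
  intros Ha. apply is_series_decr_1.
  match goal with |- is_series _ ?L => replace L with l; [exact Ha|] end.
  change (l = Cplus l (Copp (RtoC 0))). rewrite Copp_0, Cplus_0_r. reflexivity.
Qed.

Lemma is_series_C_zero : is_series (fun _ : nat => RtoC 0) (RtoC 0).
Proof.
  apply (is_series_ext (fun _ => zero)); [reflexivity|].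
  unfold is_series. apply filterlim_ext with (fun _ => zero); [|apply filterlim_const].
  intros n. unfold sum_n. rewrite sum_n_m_const_zero. reflexivity.
Qed.

Lemma is_series_Cmod_le (a : nat -> C) (b : nat -> R) l L :
  is_series a l -> is_series b L -> (forall n, Cmod (a n) <= b n)%R -> (Cmod l <= L)%R.
Proof.
  intros Ha Hb Hab.
  assert (Hl : is_lim_seq (fun n => Cmod (sum_n a n)) (Cmod l)).
  { eapply filterlim_comp; [exact Ha|].
    exact (filterlim_norm (K := C_AbsRing) (V := C_NormedModule) l). }
  assert (HL : is_lim_seq (sum_n b) L) by exact Hb.
  refine (is_lim_seq_le _ _ _ _ _ Hl HL). intros n.
  eapply Rle_trans; [apply (norm_sum_n_m a 0 n)|].
  apply sum_n_m_le. intros k. apply Hab.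
Qed.

Lemma pow_n_taylor_step (x h : C) m :
  pow_n (x + h)%C (S m) - pow_n x (S m) - natC (S m) * pow_n x m * h
  = (x + h) * (pow_n (x + h)%C m - pow_n x m - natC m * pow_n x (pred m) * h)
    + natC m * pow_n x (pred m) * h * h.
Proof. destruct m as [|m]; simpl pred; rewrite ?pow_n_C_S, ?pow_n_C_0; natC_simpl; ring. Qed.

Lemma pow_n_taylor_bound (x h : C) m : (Cmod x + Cmod h <= 1)%R ->
  (Cmod (pow_n (x + h)%C m - pow_n x m - natC m * pow_n x (pred m) * h)
   <= INR m ^ 2 * Cmod h ^ 2)%R.
Proof.
  intros Hxh. pose proof (Cmod_ge_0 x). pose proof (Cmod_ge_0 h).
  assert (Hx1 : (Cmod (x + h) <= 1)%R) by (eapply Rle_trans; [apply Cmod_triangle | lra]).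
  induction m as [|m IH].
  - rewrite natC_0, !pow_n_C_0. replace (1 - 1 - 0 * 1 * h) with (RtoC 0) by ring.
    rewrite Cmod_0. simpl. lra.
  - cbn [pred]. rewrite pow_n_taylor_step. eapply Rle_trans; [apply Cmod_triangle|].
    rewrite !Cmod_mult, Cmod_natC, Cmod_pow_n, S_INR.
    pose proof (pow_incr (Cmod x) 1 (pred m) ltac:(lra)) as Hxm. rewrite pow1 in Hxm.
    pose proof (pos_INR m). pose proof (Cmod_ge_0 (x + h)).
    pose proof (pow_le (Cmod x) (pred m) H).
    pose proof (Cmod_ge_0 (pow_n (x + h)%C m - pow_n x m - natC m * pow_n x (pred m) * h)).
    set (D := Cmod (pow_n (x + h)%C m - pow_n x m - natC m * pow_n x (pred m) * h)) in *.
    assert (Cmod (x + h) * D <= 1 * (INR m ^ 2 * Cmod h ^ 2))%R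
      by (apply Rmult_le_compat; lra).
    assert (INR m * Cmod x ^ pred m * Cmod h * Cmod h <= INR m * 1 * Cmod h * Cmod h)%R.
    { repeat apply Rmult_le_compat_r; try lra. apply Rmult_le_compat_l; lra. }
    pose proof (Rmult_le_pos (INR m + 1) (Cmod h * Cmod h) ltac:(lra) (Rmult_le_pos _ _ H0 H0)).
    simpl pow in *. nra.
Qed.

Lemma CPSeries_remainder_bound b C0 x h :
  (forall m, (Cmod (b m) <= C0 * (/ 4) ^ m)%R) -> (Cmod x + Cmod h <= 1)%R ->
  (Cmod (CPSeries b (x + h) - CPSeries b x - h * CPSeries (CPS_derive b) x)
   <= 4 * C0 * Cmod h ^ 2)%R.
Proof.
  intros Hb Hxh.
  assert (Hgb : geom_bounded b (/ 4)) by (exists C0; exact Hb).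
  pose proof (geom_bounded_const_nonneg _ _ _ Hb) as HC0.
  pose proof (Cmod_ge_0 x). pose proof (Cmod_ge_0 h). pose proof (Cmod_triangle x h).
  assert (Sxh : is_series (fun m => b m * pow_n (x + h)%C m) (CPSeries b (x + h)))
    by (apply (is_series_CPSeries _ (/ 4)); [lra | nra | exact Hgb]).
  assert (Sx : is_series (fun m => b m * pow_n x m) (CPSeries b x))
    by (apply (is_series_CPSeries _ (/ 4)); [lra | nra | exact Hgb]).
  assert (Sd : is_series (fun m => CPS_derive b m * pow_n x m) (CPSeries (CPS_derive b) x)).
  { apply (is_series_CPSeries _ (/ 2)); [lra | nra |].
    apply geom_bounded_CPS_derive; [lra|]. replace (/ 2 / 2)%R with (/ 4)%R by field. exact Hgb. }
  assert (S : is_series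
      (fun m => b m * (pow_n (x + h)%C m - pow_n x m - natC m * pow_n x (pred m) * h))
      (CPSeries b (x + h) - CPSeries b x - h * CPSeries (CPS_derive b) x)).
  { pose proof (is_series_C_plus _ _ _ _ (is_series_C_plus _ _ _ _ Sxh (is_series_C_scal (-1) _ _ Sx))
      (is_series_C_scal (- h) _ _ (is_series_C_shift _ _ Sd))) as S.
    replace (CPSeries b (x + h) - CPSeries b x - h * CPSeries (CPS_derive b) x)
      with (CPSeries b (x + h) + -1 * CPSeries b x + - h * CPSeries (CPS_derive b) x) by ring.
    refine (is_series_ext _ _ _ _ S). intros [|m]; unfold CPS_derive; simpl pred;
      match goal with |- ?A = ?B => change (@eq C A B) end; rewrite ?natC_0; ring. }
  assert (G : is_series (fun m => C0 * Cmod h ^ 2 * (3 / 4) ^ m)%R (C0 * Cmod h ^ 2 * / (1 - 3 / 4))%R).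
  { apply (is_series_scal_l _ (fun m => (3 / 4) ^ m)%R), is_series_geom. rewrite Rabs_pos_eq; lra. }
  replace (4 * C0 * Cmod h ^ 2)%R with (C0 * Cmod h ^ 2 * / (1 - 3 / 4))%R by field.
  apply (is_series_Cmod_le _ _ _ _ S G). intros m. rewrite Cmod_mult.
  pose proof (pow_n_taylor_bound x h m Hxh) as HD. pose proof (INR_sqr_le_pow3 m).
  pose proof (Cmod_ge_0 (b m)). pose proof (pow_le (/ 4) m ltac:(lra)).
  assert (E : ((3 / 4) ^ m = (/ 4) ^ m * 3 ^ m)%R) by (rewrite <- Rpow_mult_distr; f_equal; field).
  rewrite E. eapply Rle_trans; [apply Rmult_le_compat; [lra | apply Cmod_ge_0 | apply Hb | exact HD]|].
  replace (C0 * Cmod h ^ 2 * ((/ 4) ^ m * 3 ^ m))%R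
    with (C0 * (/ 4) ^ m * (3 ^ m * Cmod h ^ 2))%R by ring.
  apply Rmult_le_compat_l; [nra|]. apply Rmult_le_compat_r; [nra | lra].
Qed.

Lemma C_is_derive_of_remainder (f : C -> C) (x l : C) r M :
  (0 < r)%R -> (0 <= M)%R ->
  (forall h, (Cmod h < r)%R -> (Cmod (f (x + h) - f x - h * l)%C <= M * Cmod h ^ 2)%R) ->
  is_derive f x l.
Proof.
  intros Hr HM Hf. split; [apply is_linear_scal_l|].
  intros x0 Hx0.
  apply (is_filter_lim_locally_unique (K := C_AbsRing) (V := AbsRing_NormedModule C_AbsRing)) in Hx0.
  subst x0. intros eps.
  assert (Hdel : (0 < Rmin r (eps / (M + 1)))%R).
  { apply Rmin_glb_lt; [lra|]. apply Rdiv_lt_0_compat; [apply cond_pos | lra]. }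
  exists (mkposreal _ Hdel). intros y Hy. change (Cmod (y - x) < Rmin r (eps / (M + 1)))%R in Hy.
  change (Cmod (f y - f x - (y - x) * l) <= eps * Cmod (y - x))%R.
  set (h := y - x) in *. replace y with (x + h) by (unfold h; ring).
  pose proof (Rmin_l r (eps / (M + 1))). pose proof (Rmin_r r (eps / (M + 1))).
  pose proof (Cmod_ge_0 h). pose proof (cond_pos eps).
  assert (Hh : (Cmod h * (M + 1) <= eps)%R).
  { replace (pos eps) with (eps / (M + 1) * (M + 1))%R by (field; lra). apply Rmult_le_compat_r; lra. }
  eapply Rle_trans; [apply Hf; lra|]. nra.
Qed.

Lemma is_derive_CPSeries b x :
  geom_bounded b (/ 4) -> (Cmod x < 1)%R ->
  is_derive (CPSeries b) x (CPSeries (CPS_derive b) x).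
Proof.
  intros [C0 Hb] Hx.
  apply (C_is_derive_of_remainder _ _ _ (1 - Cmod x) (4 * C0)); [lra | |].
  - pose proof (geom_bounded_const_nonneg _ _ _ Hb). lra.
  - intros h Hh. apply CPSeries_remainder_bound; [exact Hb | lra].
Qed.

(** * Decay of the coefficients and the equation *)

Lemma gch_recurrence_eventually_small mu eps nu Omega omega c delta :
  gch_recurrence mu eps nu Omega omega c -> (0 < delta)%R ->
  exists N, forall k, (N <= k)%nat ->
    (Cmod (c (S (S k))) <= delta * (Cmod (c (S k)) + Cmod (c k)))%R.
Proof.
  intros Hc Hdelta.
  set (L := (Cmod eps * (1 + Cmod omega) + Cmod mu + Cmod Omega)%R).
  assert (HL : (0 <= L)%R).
  { unfold L. pose proof (Cmod_ge_0 eps). pose proof (Cmod_ge_0 omega).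
    pose proof (Cmod_ge_0 mu). pose proof (Cmod_ge_0 Omega). nra. }
  destruct (INR_unbounded (Cmod nu + L / delta + 1)) as [N HN].
  assert (HLdelta : (0 <= L / delta)%R) by (apply Rdiv_le_0_compat; lra).
  exists N. intros k Hk. specialize (Hc (S k)). cbv beta iota in Hc.
  set (t := INR (S k)).
  assert (Ht : (INR N + 1 <= t)%R) by (unfold t; rewrite S_INR; apply le_INR in Hk; lra).
  pose proof (Cmod_ge_0 nu). pose proof (Cmod_ge_0 omega). pose proof (Cmod_ge_0 mu).
  pose proof (Cmod_ge_0 Omega). pose proof (Cmod_ge_0 eps).
  pose proof (Cmod_ge_0 (c k)). pose proof (Cmod_ge_0 (c (S k))). pose proof (Cmod_ge_0 (c (S (S k)))).
  assert (Hmod : (Cmod (natC (S (S k)) * (natC (S k) + nu) * c (S (S k)))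
      = Cmod (eps * (natC (S k) + omega) * c (S k) + (mu * natC k + Omega) * c k))%R).
  { rewrite <- Cmod_opp. f_equal. rewrite <- (Cplus_0_l (- _)), <- Hc. ring. }
  assert (Hlead : (t * (t - Cmod nu) * Cmod (c (S (S k)))
      <= Cmod (natC (S (S k)) * (natC (S k) + nu) * c (S (S k))))%R).
  { rewrite !Cmod_mult, Cmod_natC. apply Rmult_le_compat_r; [apply Cmod_ge_0|].
    assert (Hnu : (t - Cmod nu <= Cmod (natC (S k) + nu))%R).
    { pose proof (Cmod_triangle (natC (S k) + nu) (- nu)) as Htri.
      rewrite Cmod_opp in Htri. replace (natC (S k) + nu + - nu) with (natC (S k)) in Htri by ring.
      rewrite Cmod_natC in Htri. unfold t. lra. }
    rewrite S_INR. fold t. apply Rmult_le_compat; lra. }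
  assert (Hrest : (Cmod (eps * (natC (S k) + omega) * c (S k) + (mu * natC k + Omega) * c k)
      <= L * t * (Cmod (c (S k)) + Cmod (c k)))%R).
  { eapply Rle_trans; [apply Cmod_triangle|]. rewrite !Cmod_mult.
    assert (Hom : (Cmod (natC (S k) + omega) <= t * (1 + Cmod omega))%R).
    { eapply Rle_trans; [apply Cmod_triangle|]. rewrite Cmod_natC. fold t. nra. }
    assert (HmO : (Cmod (mu * natC k + Omega) <= t * (Cmod mu + Cmod Omega))%R).
    { eapply Rle_trans; [apply Cmod_triangle|]. rewrite Cmod_mult, Cmod_natC.
      unfold t. rewrite S_INR. pose proof (pos_INR k). nra. }
    assert (Cmod eps * Cmod (natC (S k) + omega) * Cmod (c (S k))
      <= Cmod eps * (t * (1 + Cmod omega)) * Cmod (c (S k)))%R.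
    { apply Rmult_le_compat_r; [lra|]. apply Rmult_le_compat_l; lra. }
    assert (Cmod (mu * natC k + Omega) * Cmod (c k) <= t * (Cmod mu + Cmod Omega) * Cmod (c k))%R
      by (apply Rmult_le_compat_r; lra).
    assert (0 <= t)%R by (unfold t; apply pos_INR).
    assert (0 <= Cmod eps * (1 + Cmod omega) * t * Cmod (c k))%R
      by (repeat apply Rmult_le_pos; lra).
    assert (0 <= (Cmod mu + Cmod Omega) * t * Cmod (c (S k)))%R
      by (repeat apply Rmult_le_pos; lra).
    unfold L. nra. }
  assert (Hpos : (0 < t * (t - Cmod nu))%R) by nra.
  apply (Rmult_le_reg_l (t * (t - Cmod nu))); [exact Hpos|].
  assert (HLd : (L <= delta * (t - Cmod nu))%R).
  { replace L with (delta * (L / delta))%R by (field; lra). apply Rmult_le_compat_l; lra. }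
  assert (L * t * (Cmod (c (S k)) + Cmod (c k))
          <= delta * (t - Cmod nu) * t * (Cmod (c (S k)) + Cmod (c k)))%R.
  { apply Rmult_le_compat_r; [lra|]. apply Rmult_le_compat_r; [unfold t; apply pos_INR | exact HLd]. }
  lra.
Qed.

Lemma geom_bound_initial (c : nat -> C) q N : (0 < q)%R ->
  exists C0, forall m, (m <= N)%nat -> (Cmod (c m) <= C0 * q ^ m)%R.
Proof.
  intros Hq. induction N as [|N [C0 HC0]].
  - exists (Cmod (c 0%nat)). intros m Hm. replace m with 0%nat by lia. simpl. lra.
  - exists (Rmax C0 (Cmod (c (S N)) / q ^ S N)). intros m Hm.
    pose proof (pow_lt q m Hq).
    destruct (Nat.eq_dec m (S N)) as [->|Hne].
    + replace (Cmod (c (S N))) with (Cmod (c (S N)) / q ^ S N * q ^ S N)%R at 1 by (field; lra).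
      apply Rmult_le_compat_r; [lra | apply Rmax_r].
    + eapply Rle_trans; [apply HC0; lia|]. apply Rmult_le_compat_r; [lra | apply Rmax_l].
Qed.

Lemma eventually_small_geom_bounded (c : nat -> C) delta q N :
  (0 < q)%R -> (0 <= delta)%R -> (delta * (q + 1) <= q ^ 2)%R ->
  (forall k, (N <= k)%nat -> (Cmod (c (S (S k))) <= delta * (Cmod (c (S k)) + Cmod (c k)))%R) ->
  geom_bounded c q.
Proof.
  intros Hq Hdelta Hdq Hsmall.
  destruct (geom_bound_initial c q (S N) Hq) as [C0 HC0]. exists C0.
  assert (HC0pos : (0 <= C0)%R).
  { pose proof (HC0 0%nat ltac:(lia)). pose proof (Cmod_ge_0 (c 0%nat)). simpl in *. lra. }
  assert (Hpair : forall m, (Cmod (c m) <= C0 * q ^ m)%R /\ (Cmod (c (S m)) <= C0 * q ^ S m)%R).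
  { induction m as [|m [IH1 IH2]]; [split; apply HC0; lia|]. split; [exact IH2|].
    destruct (Nat.le_gt_cases (S (S m)) (S N)) as [Hle|Hgt]; [apply HC0, Hle|].
    eapply Rle_trans; [apply Hsmall; lia|].
    pose proof (pow_le q m ltac:(lra)). simpl pow in *.
    assert (Hgeom : (delta * (C0 * (q * q ^ m) + C0 * q ^ m) <= C0 * q ^ m * q ^ 2)%R).
    { replace (delta * (C0 * (q * q ^ m) + C0 * q ^ m))%R
        with (C0 * q ^ m * (delta * (q + 1)))%R by ring.
      apply Rmult_le_compat_l; [nra | exact Hdq]. }
    simpl pow in Hgeom. nra. }
  intros m. apply Hpair.
Qed.

Lemma gch_recurrence_ode mu eps nu Omega omega c x Y Y1 Y2 :
  gch_recurrence mu eps nu Omega omega c ->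
  is_series (fun m => c m * pow_n x m) Y ->
  is_series (fun m => CPS_derive c m * pow_n x m) Y1 ->
  is_series (fun m => CPS_derive (CPS_derive c) m * pow_n x m) Y2 ->
  x * Y2 + (mu * x * x + eps * x + nu) * Y1 + (Omega * x + eps * omega) * Y = 0.
Proof.
  intros Hc S0 S1 S2.
  pose proof (is_series_C_shift _ _ (is_series_C_scal x _ _ S1)) as xS1.
  pose proof (is_series_C_plus _ _ _ _ (is_series_C_plus _ _ _ _ (is_series_C_plus _ _ _ _
    (is_series_C_plus _ _ _ _ (is_series_C_plus _ _ _ _
      (is_series_C_shift _ _ (is_series_C_scal x _ _ S2))
      (is_series_C_scal mu _ _ (is_series_C_shift _ _ (is_series_C_scal x _ _ xS1))))
      (is_series_C_scal eps _ _ xS1))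
      (is_series_C_scal nu _ _ S1))
      (is_series_C_scal Omega _ _ (is_series_C_shift _ _ (is_series_C_scal x _ _ S0))))
      (is_series_C_scal (eps * omega) _ _ S0)) as Stot.
  replace (x * Y2 + (mu * x * x + eps * x + nu) * Y1 + (Omega * x + eps * omega) * Y)
    with (x * Y2 + mu * (x * (x * Y1)) + eps * (x * Y1) + nu * Y1 + Omega * (x * Y) + eps * omega * Y)
    by ring.
  apply (is_series_C_unique _ _ _ Stot).
  refine (is_series_ext _ _ _ _ is_series_C_zero). intros m.
  pose proof (Hc m) as Hm. cbv beta. symmetry.
  match goal with |- ?A = ?B => change (@eq C A B) end.
  match type of Hm with ?E = _ => transitivity (E * pow_n x m) end; [|rewrite Hm; ring].
  unfold CPS_derive. destruct m as [|[|m]]; cbv beta iota;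
    rewrite ?pow_n_C_S, ?pow_n_C_0; natC_simpl; ring.
Qed.

Theorem mainTheorem1 (mu eps nu Omega omega : C)
  (Hmu : mu <> RtoC 0) (Hnu : ~ nonpos_int nu)
  (Hga : ~ nonpos_int ((1 + nu) / 2 - Omega / (2 * mu))) :
  let gam := (1 + nu) / 2 in
  let a := Omega / (2 * mu) in
  let K := CGamma (gam - a) / CGamma gam in
  exists r : R, (0 < r)%R /\
  exists y y1 y2 : C -> C,
    forall x : C, (Cmod x < r)%R ->
      is_series (fun m => K * QWcoef omega gam a eps mu m * pow_n x m) (y x) /\
      is_derive y x (y1 x) /\
      is_derive y1 x (y2 x) /\
      x * y2 x + (mu * x * x + eps * x + nu) * y1 x
        + (Omega * x + eps * omega) * y x = RtoC 0.
Proof.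
  (* [Hga] only makes [CGamma (gam - a)] meaningful; [K] is a mere constant factor. *)
  intros gam a K.
  assert (Hgam : forall k, natC k + 2 * gam - 1 <> 0).
  { intros k Hk. apply Hnu. exists k. unfold gam in Hk.
    replace nu with (natC k + 2 * ((1 + nu) / 2) - 1 - natC k) by field. rewrite Hk. ring. }
  set (c := fun m => K * QWcoef omega gam a eps mu m).
  assert (Hrec : gch_recurrence mu eps nu Omega omega c).
  { replace nu with (2 * gam - 1) by (unfold gam; field).
    replace Omega with (2 * mu * a) by (unfold a; field; exact Hmu).
    apply gch_recurrence_scale, QWcoef_recurrence, Hgam. }
  destruct (gch_recurrence_eventually_small _ _ _ _ _ _ (/ 300) Hrec ltac:(lra)) as [N HN].
  assert (Hc : geom_bounded c (/ 16)).
  { apply (eventually_small_geom_bounded c (/ 300) _ N); [lra | lra | simpl; lra | exact HN]. }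
  assert (Hc1 : geom_bounded (CPS_derive c) (/ 8)).
  { apply geom_bounded_CPS_derive; [lra|]. replace (/ 8 / 2)%R with (/ 16)%R by field. exact Hc. }
  assert (Hc2 : geom_bounded (CPS_derive (CPS_derive c)) (/ 4)).
  { apply geom_bounded_CPS_derive; [lra|]. replace (/ 4 / 2)%R with (/ 8)%R by field. exact Hc1. }
  apply (geom_bounded_weaken _ _ (/ 4)) in Hc, Hc1; [|lra..].
  exists 1%R. split; [lra|].
  exists (CPSeries c), (CPSeries (CPS_derive c)), (CPSeries (CPS_derive (CPS_derive c))).
  intros x Hx.
  assert (Hsum : forall b, geom_bounded b (/ 4) -> is_series (fun m => b m * pow_n x m) (CPSeries b x))
    by (intros b Hb; apply (is_series_CPSeries _ (/ 4)); [lra | lra | exact Hb]).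
  split; [exact (Hsum c Hc)|].
  split; [exact (is_derive_CPSeries c x Hc Hx)|].
  split; [exact (is_derive_CPSeries _ x Hc1 Hx)|].
  exact (gch_recurrence_ode _ _ _ _ _ c x _ _ _ Hrec (Hsum _ Hc) (Hsum _ Hc1) (Hsum _ Hc2)).
Qed.
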